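(* Let $X$ be a real Banach space whose norm is Fréchet differentiable. Then an element $x\in\ell^1(X)$ is a right symmetric point of $\ell^1(X)$ if and only if there is an index $n$ such that $x_k=0$ for all $k\neq n$ and $x_n$ is a right symmetric point of $X$, i.e. $x=(0,\dots,0,x_n,0,\dots)$ with $x_n$ right symmetric in $X$.
   Context: $\ell^1(X)$ is the space of sequences $(x_n)_{n\in\mathbb{N}}$ in $X$ with $\|(x_n)\|=\sum_n\|x_n\|<\infty$. In a real normed space $Y$, $x\perp_{BJ}y$ means $\|x+\lambda y\|\ge\|x\|$ for all $\lambda\in\mathbb{R}$; $x$ is a right symmetric point if $y\perp_{BJ}x$ implies $x\perp_{BJ}y$ for all $y\in Y$. The norm of $X$ is Fréchet differentiable if for every non-zero $x$ there is $\varphi\in X^*$ with $\lim_{h\to0}\big|\|x+h\|-\|x\|-\varphi(h)\big|/\|h\|=0$. *)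

From HB Require Import structures.
From mathcomp Require Import all_boot all_order all_algebra.
From mathcomp Require Import all_classical all_reals all_analysis.
Set Implicit Arguments. Unset Strict Implicit. Unset Printing Implicit Defensive.
Import Order.TTheory GRing.Theory Num.Theory.
Import numFieldNormedType.Exports.
Local Open Scope classical_set_scope.
Local Open Scope ring_scope.

Definition bj_orth (R : realType) (X : normedModType R) (x y : X) : Prop :=
  forall l : R, `|x| <= `|x + l *: y|.

Definition right_symmetric (R : realType) (X : normedModType R) (x : X) : Prop :=
  forall y : X, bj_orth y x -> bj_orth x y.

Definition frechet_diff_norm (R : realType) (X : normedModType R) : Prop :=
  forall x : X, x != 0 ->
    exists phi : X -> R,
      (forall (a : R) (u v : X), phi (a *: u + v) = a * phi u + phi v) /\
      continuous phi /\
      (fun h : X => (`|x + h| - `|x| - phi h) / `|h|) @ (0 : X)^' --> (0 : R).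

Definition l1_norm (R : realType) (X : normedModType R) (x : nat -> X) : \bar R :=
  (\sum_(0 <= k <oo) (`|x k|)%:E)%E.

Definition in_l1 (R : realType) (X : normedModType R) (x : nat -> X) : Prop :=
  (l1_norm x < +oo)%E.

Definition l1_bj_orth (R : realType) (X : normedModType R) (x y : nat -> X) : Prop :=
  forall l : R, (l1_norm x <= l1_norm (fun k => (x k + l *: y k)%R))%E.

Definition l1_right_symmetric (R : realType) (X : normedModType R) (x : nat -> X) : Prop :=
  forall y : nat -> X, in_l1 y -> l1_bj_orth y x -> l1_bj_orth x y.

From HB Require Import structures.
From mathcomp Require Import all_boot all_order all_algebra.
From mathcomp Require Import all_classical all_reals all_analysis.
Import Order.TTheory GRing.Theory Num.Theory.
Import numFieldNormedType.Exports.
Local Open Scope ring_scope.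

(* Splitting off one coordinate, [||u|| = |u_n| + sum_(k <> n) |u_k|], reduces
   Birkhoff-James orthogonality against a sequence supported at [n] to
   orthogonality of the [n]-th coordinates, so such a sequence is right
   symmetric in l^1(X) exactly when its only entry is right symmetric in X.
   Conversely, if [x] has two nonzero entries with [|x_i| <= |x_j|], then
   [y = x_i e_i] satisfies [y _|_ x] (the entry [x_j] pays for the loss in
   coordinate [i]), while [x _|_ y] fails at [lambda = -1], since removing
   [x_i] strictly decreases the norm. *)

Lemma exists_support (T : Type) (a : T) (f : nat -> T) :
  (forall i j, i != j -> f i = a \/ f j = a) -> exists n, forall k, k <> n -> f k = a.
Proof.
move=> pairwise; have [[n fn] | all_a] := pselect (exists n, f n <> a).
- exists n => k /eqP kn; have [] // := pairwise k n kn.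
- by exists 0%N => k _; apply: contra_notP all_a => fk; exists k.
Qed.

Section L1Coordinates.
Context {R : realType} {X : normedModType R}.
Implicit Types (u v x y : nat -> X) (z : X).

Definition l1_norm_except n u : \bar R :=
  (\sum_(0 <= k <oo | k != n) (`|u k|)%:E)%E.

Definition single n z : nat -> X := fun k => if k == n then z else 0.

Lemma l1_normD1 n u : l1_norm u = (`|u n|%:E + l1_norm_except n u)%E.
Proof. exact: nneseriesD1. Qed.

Lemma l1_norm_except_ge0 n u : (0 <= l1_norm_except n u)%E.
Proof. exact: nneseries_ge0. Qed.

Lemma eq_l1_norm_except n u v :
  (forall k, k != n -> `|u k| = `|v k|) -> l1_norm_except n u = l1_norm_except n v.
Proof. by move=> euv; apply: eq_eseriesr => k /euv ->. Qed.

Lemma l1_norm_except_ge_norm n j u :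
  j != n -> (`|u j|%:E <= l1_norm_except n u)%E.
Proof.
move=> jn; rewrite /l1_norm_except (@nneseriesD1 _ _ j) //.
exact/leeDl/nneseries_ge0.
Qed.

Lemma l1_norm_except_fin_num n u : in_l1 u -> l1_norm_except n u \is a fin_num.
Proof.
rewrite /in_l1 (l1_normD1 n) ge0_fin_numE ?l1_norm_except_ge0 //.
by apply: le_lt_trans; rewrite leeDr.
Qed.

Lemma single_id n z : single n z n = z.
Proof. by rewrite /single eqxx. Qed.

Lemma single_neq n k z : k != n -> single n z k = 0.
Proof. by rewrite /single => /negbTE ->. Qed.

Lemma supported_single n x : (forall k, k <> n -> x k = 0) -> x = single n (x n).
Proof.
move=> xn; apply/funext => k; rewrite /single.
by case: eqVneq => [-> | /eqP /xn].
Qed.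

Lemma l1_norm_except_single n z u l :
  l1_norm_except n (fun k => u k + l *: single n z k) = l1_norm_except n u.
Proof. by apply: eq_l1_norm_except => k kn; rewrite single_neq ?scaler0 ?addr0. Qed.

Lemma l1_norm_single n z : l1_norm (single n z) = `|z|%:E.
Proof.
rewrite (l1_normD1 n) single_id /l1_norm_except eseries0 ?adde0 // => k _ kn.
by rewrite single_neq ?normr0.
Qed.

Lemma in_l1_single n z : in_l1 (single n z).
Proof. by rewrite /in_l1 l1_norm_single ltry. Qed.

Lemma l1_bj_orth_singler n z y :
  in_l1 y -> l1_bj_orth y (single n z) <-> bj_orth (y n) z.
Proof.
move=> y1; split=> orth l; have := orth l;
  rewrite (l1_normD1 n y) (l1_normD1 n) l1_norm_except_single single_id;
  by rewrite leeD2rE ?lee_fin // l1_norm_except_fin_num.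
Qed.

Lemma l1_bj_orth_singlel n z y : bj_orth z (y n) -> l1_bj_orth (single n z) y.
Proof.
move=> orth l; rewrite l1_norm_single (l1_normD1 n) single_id.
exact/(le_trans _ (leeDl _ (l1_norm_except_ge0 _ _)))/orth.
Qed.

Lemma l1_right_symmetric_single n z :
  l1_right_symmetric (single n z) <-> right_symmetric z.
Proof.
split=> [rs w wz | rs y y1 /(l1_bj_orth_singler n z y y1) yz].
- have wz1 : l1_bj_orth (single n w) (single n z).
    by apply/l1_bj_orth_singler; rewrite ?single_id //; exact: in_l1_single.
  have /l1_bj_orth_singler := rs _ (in_l1_single n w) wz1.
  by rewrite single_id; apply; exact: in_l1_single.
- exact/l1_bj_orth_singlel/rs.
Qed.

Lemma l1_right_symmetric_le_norm0 x i j :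
  in_l1 x -> l1_right_symmetric x -> i != j -> `|x i| <= `|x j| -> x i = 0.
Proof.
move=> x1 rs; rewrite eq_sym => ji le_ij.
have yx : l1_bj_orth (single i (x i)) x.
  move=> l; rewrite l1_norm_single (l1_normD1 i) single_id.
  apply: le_trans (leeD2l _ (l1_norm_except_ge_norm _ _ _ ji)).
  rewrite single_neq // add0r -EFinD lee_fin !normrZ.
  (* [|x_i| <= |x_i + l x_i| + |l| |x_i| <= |x_i + l x_i| + |l| |x_j|] *)
  apply: le_trans (lerD (lexx _) (ler_wpM2l (normr_ge0 l) le_ij)).
  by rewrite -normrZ -[X in `|X| <= _](addrK (l *: x i)) ler_normB.
have := rs _ (in_l1_single i (x i)) yx (-1).
rewrite (l1_normD1 i x) (l1_normD1 i) l1_norm_except_single single_id.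
rewrite scaleN1r subrr normr0 leeD2rE ?l1_norm_except_fin_num // lee_fin.
by rewrite normr_le0 => /eqP.
Qed.

Lemma l1_right_symmetric_supported x :
  in_l1 x -> l1_right_symmetric x -> exists n, forall k, k <> n -> x k = 0.
Proof.
move=> x1 rs; apply: exists_support => i j ij.
have [le_ij | /ltW le_ji] := lerP `|x i| `|x j|.
- by left; exact: l1_right_symmetric_le_norm0 le_ij.
- by right; apply: l1_right_symmetric_le_norm0 le_ji; rewrite // eq_sym.
Qed.

End L1Coordinates.

Theorem corollary3p12 (R : realType) (X : completeNormedModType R)
  (hX : frechet_diff_norm X) (x : nat -> X) (hx : in_l1 x) :
  l1_right_symmetric x <->
  exists n : nat, (forall k : nat, k <> n -> x k = 0) /\ right_symmetric (x n).
Proof.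
split=> [rs | [n [xn rs]]].
- have [n xn] := l1_right_symmetric_supported x hx rs.
  exists n; split=> //; apply/(l1_right_symmetric_single n).
  by rewrite -(supported_single n x xn).
- by rewrite (supported_single n x xn) l1_right_symmetric_single.
Qed.
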